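(* Let $\Delta$ be a pure $d$-dimensional simplicial complex on vertex set $[n]$, and $\mathbb{K}$ a field. For every $1\le i\le d-1$ there exists $j\ge1$ such that $\mathcal{F}(\Delta^{(i)})^{(j)}\neq\mathcal{F}(\Delta^{(i)})^j$ in $\mathbb{K}[x_1,\dots,x_n]$.
   Context: $\Delta^{(i)}$ is the $i$-th skeleton of $\Delta$ (faces of dimension at most $i$). For a simplicial complex $\Gamma$ with facets $F_1,\dots,F_s$, $\mathcal{F}(\Gamma)=(x_{F_1},\dots,x_{F_s})$ with $x_F=\prod_{j\in F}x_j$. For a squarefree monomial ideal $I$, $I^{(m)}=\bigcap_{P\in\mathrm{Ass}(I)}P^m$. *)

From HB Require Import structures.
From mathcomp Require Import all_boot all_order all_algebra.
From mathcomp Require Import mpoly.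
Set Implicit Arguments. Unset Strict Implicit. Unset Printing Implicit Defensive.
Import GRing.Theory.
Local Open Scope ring_scope.

Section Ideals.
Variables (K : fieldType) (n : nat).
Local Notation P := {mpoly K[n]}.

Definition ideal_gen (S : P -> Prop) : P -> Prop :=
  fun g => exists rs : seq (P * P),
    (forall q, q \in rs -> S q.2) /\ g = \sum_(q <- rs) q.1 * q.2.

Definition ideal_pow (I : P -> Prop) (m : nat) : P -> Prop :=
  ideal_gen (fun g => exists s : seq P,
    [/\ size s = m, (forall a, a \in s -> I a) & g = \prod_(a <- s) a]).

Definition is_ideal (I : P -> Prop) : Prop :=
  [/\ I 0, (forall a b, I a -> I b -> I (a + b)) & (forall r a, I a -> I (r * a))].

Definition prime_ideal (I : P -> Prop) : Prop :=
  [/\ is_ideal I, ~ I 1 & (forall a b, I (a * b) -> I a \/ I b)].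

(* Associated primes: primes of the form (I : f). *)
Definition ass_prime (I Pr : P -> Prop) : Prop :=
  prime_ideal Pr /\ exists f : P, forall g, Pr g <-> I (g * f).

Definition symb_pow (I : P -> Prop) (m : nat) : P -> Prop :=
  fun g => forall Pr, ass_prime I Pr -> ideal_pow Pr m g.

Definition ideal_eq (I J : P -> Prop) : Prop := forall g, I g <-> J g.

End Ideals.

Section Complexes.
Variable n : nat.

Definition simplicial_complex (D : {set {set 'I_n}}) : Prop :=
  D != set0 /\ (forall F G : {set 'I_n}, F \in D -> G \subset F -> G \in D).

Definition has_vertex_set (D : {set {set 'I_n}}) : Prop :=
  forall v : 'I_n, [set v] \in D.

Definition facets (D : {set {set 'I_n}}) : {set {set 'I_n}} :=
  [set F in D | [forall G in D, (F \subset G) ==> (G == F)]].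

Definition pure_dim (D : {set {set 'I_n}}) (d : nat) : Prop :=
  forall F, F \in facets D -> #|F| = d.+1.

Definition skeleton (D : {set {set 'I_n}}) (i : nat) : {set {set 'I_n}} :=
  [set F in D | (#|F| <= i.+1)%N].

Definition facet_ideal (K : fieldType) (D : {set {set 'I_n}}) : {mpoly K[n]} -> Prop :=
  ideal_gen (fun g => exists2 F, F \in facets D & g = \prod_(j in F) 'X_j).

End Complexes.

From HB Require Import structures.
From mathcomp Require Import all_boot all_order all_algebra.
From mathcomp Require Import mpoly.
From mathcomp Require Import zify.
Set Implicit Arguments. Unset Strict Implicit. Unset Printing Implicit Defensive.
Import GRing.Theory.
Local Open Scope ring_scope.

(* Take j = 2 and a face S of Δ with i + 2 vertices (it exists because
   i + 2 <= d + 1).  Every (i+1)-subset of S is a facet of Δ^(i), so an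
   associated prime, containing x_F for each of them, contains a variable
   from each (i+1)-subset of S, hence two distinct variables of S; thus x_S
   lies in P^2 for every associated prime P.  But F(Δ^(i))^2 is generated
   in degree 2(i+1) > i+2 = deg x_S, so x_S is not in it. *)

Section LowDegree.
Variables (K : fieldType) (n : nat).
Local Notation P := {mpoly K[n]}.

Definition vanishes_below (k : nat) (g : P) : Prop :=
  forall m : 'X_{1..n}, (mdeg m < k)%N -> g@_m = 0.

Lemma vanishes_below0 (g : P) : vanishes_below 0 g.
Proof. by []. Qed.

Lemma vanishes_belowM k1 k2 (a b : P) :
  vanishes_below k1 a -> vanishes_below k2 b -> vanishes_below (k1 + k2) (a * b).
Proof.
move=> va vb m ltm; rewrite mcoeffM big1 // => -[p q] /= /eqP mE.
have degE : mdeg m = (mdeg p + mdeg q)%N by rewrite -mdegD -mE.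
have [ltp|lep] := ltnP (mdeg p) k1; first by rewrite va // mul0r.
rewrite vb ?mulr0 //; lia.
Qed.

Lemma vanishes_below_prod k (s : seq P) :
  (forall a, a \in s -> vanishes_below k a) ->
  vanishes_below (size s * k) (\prod_(a <- s) a).
Proof.
elim: s => [|a s IHs] vs; first by move=> m.
rewrite big_cons mulSn; apply: vanishes_belowM; first exact/vs/mem_head.
by apply: IHs => b bs; apply: vs; rewrite in_cons bs orbT.
Qed.

Lemma vanishes_below_ideal_gen k (S : P -> Prop) g :
  (forall q, S q -> vanishes_below k q) -> ideal_gen S g -> vanishes_below k g.
Proof.
move=> vS [rs [Srs ->]] m ltm; rewrite raddf_sum big_seq big1 // => q qrs.
exact: (vanishes_belowM (vanishes_below0 q.1) (vS _ (Srs q qrs))).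
Qed.

Lemma vanishes_below_ideal_pow k e (I : P -> Prop) g :
  (forall a, I a -> vanishes_below k a) -> ideal_pow I e g ->
  vanishes_below (e * k) g.
Proof.
move=> vI; apply: vanishes_below_ideal_gen => _ [s [<- Is ->]].
by apply: vanishes_below_prod => a /Is /vI.
Qed.

Lemma mprodX_set (F : {set 'I_n}) :
  \prod_(j in F) ('X_j : P) = 'X_[\sum_(j in F) U_(j)].
Proof. exact: mprodXE. Qed.

Lemma mdeg_sum_set (F : {set 'I_n}) : mdeg (\sum_(j in F) U_(j))%MM = #|F|.
Proof. by rewrite mdeg_sum (eq_bigr (fun _ => 1%N)) ?sum1_card // => j _; rewrite mdeg1. Qed.

Lemma vanishes_below_mprodX (F : {set 'I_n}) :
  vanishes_below #|F| (\prod_(j in F) 'X_j).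
Proof.
move=> m ltm; rewrite mprodX_set mcoeffX.
by case: eqP ltm => // <-; rewrite mdeg_sum_set ltnn.
Qed.

Lemma mprodX_not_vanishes_below (F : {set 'I_n}) k :
  (#|F| < k)%N -> ~ vanishes_below k (\prod_(j in F) 'X_j).
Proof.
move=> ltFk /(_ (\sum_(j in F) U_(j))%MM); rewrite mdeg_sum_set mprodX_set mcoeffX eqxx.
by move/(_ ltFk)/eqP; rewrite oner_eq0.
Qed.

End LowDegree.

Section PrimeIdeals.
Variables (K : fieldType) (n : nat).
Local Notation P := {mpoly K[n]}.

Lemma ideal_gen_mul (S : P -> Prop) f g : S g -> ideal_gen S (f * g).
Proof. by exists [:: (f, g)]; split => [q /[!inE] /eqP -> //|]; rewrite big_seq1. Qed.

Lemma ideal_pow2M (I : P -> Prop) r a b : I a -> I b -> ideal_pow I 2 (r * (a * b)).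
Proof.
move=> Ia Ib; apply: ideal_gen_mul; exists [:: a; b]; split => //.
  by move=> c /[!inE] /orP[] /eqP ->.
by rewrite big_cons big_seq1.
Qed.

Lemma ass_prime_gen (S : P -> Prop) Pr g : ass_prime (ideal_gen S) Pr -> S g -> Pr g.
Proof. by move=> [_ [f PrE]] Sg; apply/PrE; rewrite mulrC; apply: ideal_gen_mul. Qed.

Lemma prime_ideal_prod (Pr : P -> Prop) (I : eqType) (r : seq I) (F : I -> P) :
  prime_ideal Pr -> Pr (\prod_(j <- r) F j) -> exists2 j, j \in r & Pr (F j).
Proof.
move=> [_ Pr1 PrM]; elim: r => [|a r IHr]; first by rewrite big_nil.
rewrite big_cons => /PrM [Pra|Prr]; first by exists a; rewrite ?mem_head.
by have [j jr Prj] := IHr Prr; exists j; rewrite // in_cons jr orbT.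
Qed.

Lemma prime_ideal_mprodX (Pr : P -> Prop) (F : {set 'I_n}) :
  prime_ideal Pr -> Pr (\prod_(j in F) 'X_j) -> exists2 v, v \in F & Pr 'X_v.
Proof.
move=> prPr; rewrite -big_enum => /(prime_ideal_prod prPr) [v].
by rewrite mem_enum; exists v.
Qed.

Lemma prime_pow2_mprodX (Pr : P -> Prop) (S : {set 'I_n}) :
  prime_ideal Pr -> (0 < #|S|)%N ->
  (forall F : {set 'I_n}, F \subset S -> #|F| = #|S|.-1 -> Pr (\prod_(j in F) 'X_j)) ->
  ideal_pow Pr 2 (\prod_(j in S) 'X_j).
Proof.
move=> prPr /card_gt0P [a0 a0S] PrS.
have hit a : a \in S -> exists2 b, b \in S :\ a & Pr 'X_b.
  move=> aS; apply: (prime_ideal_mprodX prPr); apply: PrS (subsetDl _ _) _.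
  by rewrite (cardsD1 a S) aS.
have [a /setD1P [_ aS] Pra] := hit a0 a0S.
have [b /setD1P [ba bS] Prb] := hit a aS.
have bSa : (b \in S) && (b != a) by rewrite bS ba.
rewrite (bigD1 a aS) (bigD1 b bSa) /=.
by rewrite mulrA mulrC; apply: ideal_pow2M.
Qed.

End PrimeIdeals.

Lemma exists_card_between (T : finType) (G A : {set T}) k :
  G \subset A -> (#|G| <= k <= #|A|)%N ->
  exists B : {set T}, [/\ G \subset B, B \subset A & #|B| = k].
Proof.
move=> GA; elim: k => [|k IHk] /andP [leGk lekA].
  by exists G; move: leGk; rewrite leqn0 => /eqP cG; rewrite subxx.
have [ltGk|] := ltnP #|G| k.+1; last by exists G; split => //; lia.
have [B [GB BA cB]] : exists B : {set T}, [/\ G \subset B, B \subset A & #|B| = k].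
  by apply: IHk; lia.
have /properP [_ [v vA vB]] : B \proper A by rewrite properEcard BA cB.
exists (v |: B); split.
- exact: subset_trans GB (subsetUr _ _).
- by rewrite subUset sub1set vA BA.
- by rewrite cardsU1 vB cB.
Qed.

Section Complexes.
Variables (n : nat) (D : {set {set 'I_n}}).
Hypothesis cxD : simplicial_complex D.

Lemma face_sub_facet G : G \in D -> exists2 F, F \in facets D & G \subset F.
Proof.
move=> GD; pose above H := (H \in D) && (G \subset H).
have aboveG : above G by rewrite /above GD subxx.
have [F /andP [FD GF] maxF] := arg_maxnP (fun H : {set 'I_n} => #|H|) aboveG.
exists F => //; rewrite inE FD; apply/forall_inP => H HD; apply/implyP => FH.
by rewrite eq_sym eqEcard FH; apply: maxF; rewrite /above HD (subset_trans GF FH).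
Qed.

Variable d : nat.
Hypothesis pureD : pure_dim D d.

Lemma pure_face_card k : (k <= d.+1)%N -> exists2 S, S \in D & #|S| = k.
Proof.
move=> lekd; have [G GD] := set0Pn _ cxD.1.
have [F /[dup] /setIdP [FD _] /pureD cF _] := face_sub_facet (cxD.2 _ _ GD (sub0set G)).
have [S [_ SF cS]] := @exists_card_between _ set0 F k (sub0set F) ltac:(rewrite cards0; lia).
by exists S; first exact: cxD.2 SF.
Qed.

Lemma facets_skeleton i F : (i <= d)%N ->
  (F \in facets (skeleton D i)) = (F \in D) && (#|F| == i.+1).
Proof.
move=> leid; apply/idP/idP => [|/andP [FD /eqP cF]]; last first.
  rewrite !inE FD cF leqnn /=; apply/forall_inP => G /setIdP [_ cG].
  by apply/implyP => FG; rewrite eq_sym eqEcard FG cF.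
move=> /setIdP [/setIdP [FD leF] /forall_inP maxF]; rewrite FD /=.
have [Fc /[dup] /setIdP [FcD _] /pureD cFc FFc] := face_sub_facet FD.
have [B [FB BFc cB]] := @exists_card_between _ F Fc i.+1 FFc ltac:(lia).
have BD : B \in skeleton D i by rewrite inE (cxD.2 _ _ FcD BFc) cB leqnn.
by move: (maxF B BD); rewrite FB => /eqP <-; rewrite cB.
Qed.

End Complexes.

Lemma facet_ideal_vanishes_below (K : fieldType) n (D : {set {set 'I_n}}) k g :
  (forall F, F \in facets D -> #|F| = k) -> @facet_ideal n K D g ->
  vanishes_below k g.
Proof.
move=> cD; apply: vanishes_below_ideal_gen => _ [F FD ->].
by rewrite -(cD F FD); apply: vanishes_below_mprodX.
Qed.

Theorem proposition6p2 (K : fieldType) (n d : nat) (D : {set {set 'I_n}}) :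
  simplicial_complex D -> has_vertex_set D -> pure_dim D d ->
  forall i : nat, (1 <= i <= d - 1)%N ->
  exists j : nat, (1 <= j)%N /\
    ~ ideal_eq (symb_pow (@facet_ideal n K (skeleton D i)) j)
               (ideal_pow (@facet_ideal n K (skeleton D i)) j).
Proof.
move=> cxD _ pureD i /andP [i_gt0 le_id]; exists 2%N; split => // eqI.
have facetsE F : (F \in facets (skeleton D i)) = (F \in D) && (#|F| == i.+1).
  by apply: (facets_skeleton cxD pureD); lia.
have [S SD cS] : exists2 S, S \in D & #|S| = i.+2 by apply: (pure_face_card cxD pureD); lia.
have symbS : symb_pow (@facet_ideal n K (skeleton D i)) 2 (\prod_(j in S) 'X_j).
  move=> Pr assPr; apply: prime_pow2_mprodX; [by case: assPr | by rewrite cS |].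
  move=> F FS cF; apply: (ass_prime_gen assPr) => /=; exists F => //.
  by rewrite facetsE (cxD.2 _ _ SD FS) cF cS /=.
have cardF F : F \in facets (skeleton D i) -> #|F| = i.+1.
  by rewrite facetsE => /andP [_ /eqP].
have vS := vanishes_below_ideal_pow (fun g => facet_ideal_vanishes_below cardF) ((eqI _).1 symbS).
by apply: mprodX_not_vanishes_below vS; rewrite cS; lia.
Qed.
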